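(* Let $f:(k+1)^V\to\mathbb{R}$ be monotone $k$-submodular with all marginal values $\Delta_{e,j}f(S)\in[0,1]$, let $F$ be its multilinear extension, and write $F_{i,j}=\partial F/\partial x_{i,j}$. Let $x\in\mathcal P$, let $(i_1,j_1),(i_2,j_2)\in[n]\times[k]$ be two distinct coordinates, let $\beta,\gamma\ge0$ with $0<\beta+\gamma\le1$, and suppose $x+\beta(e_{i_1,j_1}-e_{i_2,j_2})\in\mathcal P$ and $x-\gamma(e_{i_1,j_1}-e_{i_2,j_2})\in\mathcal P$. Let $x'$ be the random point equal to $x+\beta(e_{i_1,j_1}-e_{i_2,j_2})$ with probability $\frac{\gamma}{\beta+\gamma}$ and to $x-\gamma(e_{i_1,j_1}-e_{i_2,j_2})$ with probability $\frac{\beta}{\beta+\gamma}$. Then for every $\lambda\in[0,1]$, $$\mathbb{E}\big[e^{\lambda(F(x)-F(x'))}\big]\le e^{\lambda^2\beta\gamma\,(F_{i_2,j_2}(x)-F_{i_1,j_1}(x))^2}.$$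
   Context: Let $V=[n]=\{1,\dots,n\}$ and let $k\ge 1$ be an integer. Write $(k+1)^V$ for the set of $k$-tuples $S=(S_1,\dots,S_k)$ of pairwise disjoint subsets of $V$. For $S,T\in(k+1)^V$ let $S\sqcap T=(S_1\cap T_1,\dots,S_k\cap T_k)$ and let $S\sqcup T$ be the tuple whose $j$-th component is $(S_j\cup T_j)\setminus\bigcup_{l\neq j}(S_l\cup T_l)$. A function $f:(k+1)^V\to\mathbb{R}$ is $k$-submodular if $f(S)+f(T)\ge f(S\sqcap T)+f(S\sqcup T)$ for all $S,T\in(k+1)^V$. Write $S\preceq T$ if $S_j\subseteq T_j$ for all $j$; $f$ is monotone if $S\preceq T$ implies $f(S)\le f(T)$. For $e\notin\bigcup_l S_l$ and $j\in[k]$, $\Delta_{e,j}f(S)=f(S_1,\dots,S_{j-1},S_j\cup\{e\},S_{j+1},\dots,S_k)-f(S)$. Let $\mathcal P=\{x\in[0,1]^{n\times k}:\sum_{j=1}^k x_{i,j}\le 1\ \forall i\in[n]\}$. The multilinear extension of $f$ is the polynomial $F(x)=\sum_{S\in(k+1)^V} f(S_1,\dots,S_k)\Big(\prod_{j\in[k]}\prod_{i\in S_j}x_{i,j}\Big)\prod_{i\in V\setminus\bigcup_j S_j}\Big(1-\sum_{j=1}^k x_{i,j}\Big)$, considered on $\mathcal P$. $e_{i,j}$ denotes the standard basis vector of $\mathbb{R}^{n\times k}$ at coordinate $(i,j)$. *)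

From HB Require Import structures.
From mathcomp Require Import all_boot all_order all_algebra.
From mathcomp Require Import all_classical all_reals all_analysis.
Set Implicit Arguments. Unset Strict Implicit. Unset Printing Implicit Defensive.
Import Order.TTheory GRing.Theory Num.Theory.
Local Open Scope ring_scope.

(* An element S = (S_1,...,S_k) of (k+1)^V, V = [n] (encoded as 'I_n), is
   encoded by its labelling s : V -> option 'I_k, where s i = Some j iff
   i \in S_j, and s i = None iff i is in no S_j. *)
Definition ktuple (n k : nat) := {ffun 'I_n -> option 'I_k}.

Definition comp n k (s : ktuple n k) (j : 'I_k) : {set 'I_n} :=
  [set i | s i == Some j].

Definition kmeet n k (s t : ktuple n k) : ktuple n k :=
  [ffun i => if s i == t i then s i else None].

(* S ⊔ T : j-th component (S_j ∪ T_j) \ ∪_{l<>j} (S_l ∪ T_l) *)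
Definition kjoin n k (s t : ktuple n k) : ktuple n k :=
  [ffun i => match s i, t i with
             | None, b => b
             | a, None => a
             | Some a, Some b => if a == b then Some a else None
             end].

Definition ksubmodular (R : realType) n k (f : ktuple n k -> R) :=
  forall s t : ktuple n k, f (kmeet s t) + f (kjoin s t) <= f s + f t.

Definition kle n k (s t : ktuple n k) := forall j, comp s j \subset comp t j.

Definition kmonotone (R : realType) n k (f : ktuple n k -> R) :=
  forall s t : ktuple n k, kle s t -> f s <= f t.

Definition kadd n k (s : ktuple n k) (e : 'I_n) (j : 'I_k) : ktuple n k :=
  [ffun i => if i == e then Some j else s i].

(* Δ_{e,j} f(S), for e not in any S_l *)
Definition marginal (R : realType) n k (f : ktuple n k -> R)
  (e : 'I_n) (j : 'I_k) (s : ktuple n k) : R := f (kadd s e j) - f s.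

Definition marginals_in01 (R : realType) n k (f : ktuple n k -> R) :=
  forall (s : ktuple n k) (e : 'I_n) (j : 'I_k), s e = None -> 0 <= marginal f e j s <= 1.

Definition inP (R : realType) n k (x : 'M[R]_(n, k)) :=
  (forall i j, 0 <= x i j <= 1) /\ (forall i, \sum_(j < k) x i j <= 1).

Definition multilin (R : realType) n k (f : ktuple n k -> R) (x : 'M[R]_(n, k)) : R :=
  \sum_(s : ktuple n k) f s *
    \prod_(i < n) match s i with
                  | Some j => x i j
                  | None => 1 - \sum_(l < k) x i l
                  end.

Definition partialF (R : realType) n k (F : 'M[R]_(n, k) -> R)
  (i : 'I_n) (j : 'I_k) (x : 'M[R]_(n, k)) : R :=
  derive1 (fun t : R => F (x + t *: delta_mx i j)) 0.

From Pilot Require Import Defs.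
From HB Require Import structures.
From mathcomp Require Import all_boot all_order all_algebra.
From mathcomp Require Import all_classical all_reals all_analysis.
From mathcomp Require Import ring lra.
Set Implicit Arguments. Unset Strict Implicit. Unset Printing Implicit Defensive.
Import Order.TTheory GRing.Theory Num.Theory.
Local Open Scope ring_scope.

(* Idea.  Along the direction d = e_{i1,j1} - e_{i2,j2}, F is a polynomial of
   degree at most two:  F(x + t d) = F(x) + t (F_{i1,j1}(x) - F_{i2,j2}(x)) - t^2 C.
   Toggling the labels of the elements involved reindexes the coefficients:
   each partial derivative F_{a,b}(x) is an average of marginal values
   Δ_{a,b} f(S), hence lies in [0,1]; and C is an average of second
   differences f(S ⊔ T) + f(S ⊓ T) - f(S) - f(T), hence C <= 0 by
   k-submodularity.  With D = F_{i2,j2}(x) - F_{i1,j1}(x) in [-1,1], the two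
   outcomes give exponents λ(tD + t^2 C) <= λ t D (t = β or -γ), and the
   elementary bound e^y <= 1 + y + y^2 on [-1,1] yields the expectation bound
   1 + λ^2 β γ D^2 <= exp(λ^2 β γ D^2), the linear terms cancelling. *)

Lemma prod_perturb1 (R : comPzRingType) (I : finType) (c v : I -> R) (t : R) a :
  (forall i, i != a -> v i = 0) ->
  \prod_i (c i + t * v i) = \prod_i c i + t * (v a * \prod_(i | i != a) c i).
Proof.
move=> v_supp; rewrite (bigD1 a) //= [X in _ = X + _](bigD1 a) //=.
rewrite (eq_bigr c) => [|i ia]; last by rewrite v_supp // mulr0 addr0.
ring.
Qed.

Lemma prod_perturb2 (R : comPzRingType) (I : finType) (c v1 v2 : I -> R) (t : R) a1 a2 :
  a1 != a2 ->
  (forall i, i != a1 -> v1 i = 0) -> (forall i, i != a2 -> v2 i = 0) ->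
  \prod_i (c i + t * (v1 i - v2 i)) = \prod_i c i
    + t * (v1 a1 * \prod_(i | i != a1) c i - v2 a2 * \prod_(i | i != a2) c i)
    - t ^+ 2 * (v1 a1 * v2 a2 * \prod_(i | (i != a1) && (i != a2)) c i).
Proof.
move=> ne v1_supp v2_supp; have ne' : a2 != a1 by rewrite eq_sym.
have drop2 (g : I -> R) b1 b2 : b1 != b2 ->
    \prod_(i | i != b1) g i = g b2 * \prod_(i | (i != b1) && (i != b2)) g i.
  by move=> nb; rewrite (bigD1 b2) //= eq_sym.
have full (g : I -> R) :
    \prod_i g i = g a1 * (g a2 * \prod_(i | (i != a1) && (i != a2)) g i).
  by rewrite (bigD1 a1) //= (drop2 _ _ _ ne).
have drop_a2 (g : I -> R) :
    \prod_(i | i != a2) g i = g a1 * \prod_(i | (i != a1) && (i != a2)) g i.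
  rewrite (drop2 _ _ _ ne'); congr (_ * _).
  by apply: eq_bigl => i; rewrite andbC.
rewrite !full (drop2 _ _ _ ne) drop_a2.
rewrite (eq_bigr c) => [|i /andP[i1 i2]]; last first.
  by rewrite v1_supp // v2_supp // subrr mulr0 addr0.
rewrite (v1_supp a2 ne') (v2_supp a1 ne); ring.
Qed.

Lemma sum_option (R : nmodType) k (h : option 'I_k -> R) :
  \sum_(o : option 'I_k) h o = h None + \sum_(j < k) h (Some j).
Proof.
rewrite (bigD1 None) //=; congr (_ + _).
rewrite (reindex_omap Some (fun o => o)) /=; last by case.
by apply: eq_bigl => j; rewrite eqxx.
Qed.

Section MultilinearAlongLines.
Variables (R : realType) (n k : nat) (f : ktuple n k -> R).

(* weight y i o: probability that row i of y, rounded independently, receives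
   the label o (Some j = "i joins S_j", None = "i stays outside"). *)
Definition weight (y : 'M[R]_(n, k)) (i : 'I_n) (o : option 'I_k) : R :=
  match o with Some j => y i j | None => 1 - \sum_(l < k) y i l end.

Definition dweight (d : 'M[R]_(n, k)) (i : 'I_n) (o : option 'I_k) : R :=
  match o with Some j => d i j | None => - \sum_(l < k) d i l end.

(* The coefficient of the row-a weight of label o in direction e_{a,b}. *)
Definition sgn (b : 'I_k) (o : option 'I_k) : R :=
  match o with Some j => (j == b)%:R | None => -1 end.

Lemma multilinE y :
  multilin f y = \sum_(s : ktuple n k) f s * \prod_i weight y i (s i).
Proof. by []. Qed.

Lemma weightD y d t i o : weight (y + t *: d) i o = weight y i o + t * dweight d i o.
Proof.
case: o => [j|] /=; rewrite ?mxE //.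
rewrite (eq_bigr (fun l => y i l + t * d i l)); last by move=> l _; rewrite !mxE.
rewrite big_split /= -mulr_sumr; ring.
Qed.

Lemma dweight_delta a b i o : dweight (delta_mx a b) i o = (i == a)%:R * sgn b o.
Proof.
case: o => [j|] /=; rewrite ?mxE; first by rewrite -mulnb natrM.
case: eqVneq => [->|ne] /=.
  rewrite (bigD1 b) //= big1 => [|l lb]; rewrite !mxE ?eqxx //=.
    by rewrite addr0 mul1r.
  by rewrite (negbTE lb).
by rewrite big1 ?mul0r ?oppr0 // => l _; rewrite mxE (negbTE ne).
Qed.

Lemma dweightB d1 d2 i o : dweight (d1 - d2) i o = dweight d1 i o - dweight d2 i o.
Proof.
case: o => [j|] /=; rewrite ?mxE //.
rewrite (eq_bigr (fun l => d1 i l - d2 i l)); last by move=> l _; rewrite !mxE.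
by rewrite sumrB opprB addrC opprK.
Qed.

Lemma weight_ge0 x i o : inP x -> 0 <= weight x i o.
Proof.
case=> x01 row_le1; case: o => [j|] /=; first by case/andP: (x01 i j).
by rewrite subr_ge0.
Qed.

Definition cof1 (x : 'M[R]_(n, k)) (a : 'I_n) (s : ktuple n k) : R :=
  \prod_(i | i != a) weight x i (s i).
Definition cof2 (x : 'M[R]_(n, k)) (a1 a2 : 'I_n) (s : ktuple n k) : R :=
  \prod_(i | (i != a1) && (i != a2)) weight x i (s i).

Lemma cof1_ge0 x a s : inP x -> 0 <= cof1 x a s.
Proof. by move=> hx; apply: prodr_ge0 => i _; exact: weight_ge0. Qed.

Lemma cof2_ge0 x a1 a2 s : inP x -> 0 <= cof2 x a1 a2 s.
Proof. by move=> hx; apply: prodr_ge0 => i _; exact: weight_ge0. Qed.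

(* slope x a b is the partial derivative F_{a,b}(x); cross x a1 b1 a2 b2 is
   minus the coefficient of t^2 in F(x + t (e_{a1,b1} - e_{a2,b2})). *)
Definition slope (x : 'M[R]_(n, k)) (a : 'I_n) (b : 'I_k) : R :=
  \sum_(s : ktuple n k) f s * (sgn b (s a) * cof1 x a s).
Definition cross (x : 'M[R]_(n, k)) a1 b1 a2 b2 : R :=
  \sum_(s : ktuple n k) f s * (sgn b1 (s a1) * sgn b2 (s a2) * cof2 x a1 a2 s).

Lemma multilin_delta x a b t :
  multilin f (x + t *: delta_mx a b) = multilin f x + t * slope x a b.
Proof.
rewrite !multilinE /slope mulr_sumr -big_split /=; apply: eq_bigr => s _.
rewrite (eq_bigr (fun i => weight x i (s i) + t * ((i == a)%:R * sgn b (s i))));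
  last by move=> i _; rewrite weightD dweight_delta.
rewrite (@prod_perturb1 _ _ _ _ _ a) ?eqxx ?mul1r /cof1; first ring.
by move=> i ia; rewrite (negbTE ia) mul0r.
Qed.

Lemma multilin_dir x a1 b1 a2 b2 t : a1 != a2 ->
  multilin f (x + t *: (delta_mx a1 b1 - delta_mx a2 b2)) =
  multilin f x + t * (slope x a1 b1 - slope x a2 b2) - t ^+ 2 * cross x a1 b1 a2 b2.
Proof.
move=> ne; rewrite !multilinE /slope /cross mulrBr !mulr_sumr -sumrB -big_split -sumrB /=.
apply: eq_bigr => s _.
rewrite (eq_bigr (fun i => weight x i (s i) +
    t * ((i == a1)%:R * sgn b1 (s i) - (i == a2)%:R * sgn b2 (s i))));
  last by move=> i _; rewrite weightD dweightB !dweight_delta.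
rewrite (@prod_perturb2 _ _ _ _ _ _ a1 a2) ?eqxx ?mul1r /cof1 /cof2 //; first ring.
  by move=> i ia; rewrite (negbTE ia) mul0r.
by move=> i ia; rewrite (negbTE ia) mul0r.
Qed.

Lemma multilin_dir_same x a b1 b2 t :
  multilin f (x + t *: (delta_mx a b1 - delta_mx a b2)) =
  multilin f x + t * (slope x a b1 - slope x a b2).
Proof.
rewrite !multilinE /slope mulrBr !mulr_sumr -sumrB -big_split /=.
apply: eq_bigr => s _.
rewrite (eq_bigr (fun i => weight x i (s i) +
    t * ((i == a)%:R * sgn b1 (s i) - (i == a)%:R * sgn b2 (s i))));
  last by move=> i _; rewrite weightD dweightB !dweight_delta.
rewrite (@prod_perturb1 _ _ _ _ _ a) ?eqxx ?mul1r /cof1; first ring.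
by move=> i ia; rewrite (negbTE ia) !mul0r subrr.
Qed.

Definition toggle_label (b : 'I_k) (o : option 'I_k) : option 'I_k :=
  if o == None then Some b else if o == Some b then None else o.

Lemma toggle_labelK b : involutive (toggle_label b).
Proof.
move=> [j|]; rewrite /toggle_label /=; last by rewrite eqxx.
case: (eqVneq j b) => [->|ne] /=; first by rewrite !eqxx.
by have /negbTE sne : Some j != Some b by []; rewrite sne /= sne.
Qed.

Lemma toggle_label_eqS b o : (toggle_label b o == Some b) = (o == None).
Proof.
case: o => [j|]; rewrite /toggle_label /=; last by rewrite !eqxx.
case: (eqVneq j b) => [->|ne] /=; first by rewrite !eqxx.
by have /negbTE sne : Some j != Some b by []; rewrite sne /= sne.
Qed.

(* toggle a b s moves the element a between "outside" and S_b; it is an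
   involution of (k+1)^V, used to reindex the sums defining slope and cross. *)
Definition toggle (a : 'I_n) (b : 'I_k) (s : ktuple n k) : ktuple n k :=
  [ffun i => if i == a then toggle_label b (s i) else s i].

Lemma toggle_at a b s : toggle a b s a = toggle_label b (s a).
Proof. by rewrite ffunE eqxx. Qed.

Lemma toggle_ne a b s i : i != a -> toggle a b s i = s i.
Proof. by move=> ia; rewrite ffunE (negbTE ia). Qed.

Lemma toggleK a b : involutive (toggle a b).
Proof.
move=> s; apply/ffunP => i; rewrite !ffunE.
by case: eqP => [->|] //; rewrite toggle_labelK.
Qed.

Lemma toggle_kadd a b (s : ktuple n k) : s a = None -> toggle a b s = Defs.kadd s a b.
Proof.
move=> sa; apply/ffunP => i; rewrite !ffunE.
by case: eqP => [->|] //; rewrite sa /toggle_label eqxx.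
Qed.

Lemma cof1_toggle x a b s : cof1 x a (toggle a b s) = cof1 x a s.
Proof. by apply: eq_bigr => i ia; rewrite toggle_ne. Qed.

Lemma slope_marginals x a b :
  slope x a b = \sum_(s : ktuple n k)
     (s a == None)%:R * ((f (toggle a b s) - f s) * cof1 x a s).
Proof.
have -> : slope x a b =
    \sum_(s : ktuple n k) (s a == Some b)%:R * (f s * cof1 x a s)
  - \sum_(s : ktuple n k) (s a == None)%:R * (f s * cof1 x a s).
  rewrite /slope -sumrB; apply: eq_bigr => s _.
  by case: (s a) => [j|] /=; ring.
rewrite (reindex_inj (can_inj (toggleK a b))) /= -sumrB; apply: eq_bigr => s _.
rewrite toggle_at toggle_label_eqS cof1_toggle; ring.
Qed.

Lemma sum_cof1 x a : inP x ->
  \sum_(s : ktuple n k) (s a == None)%:R * cof1 x a s = 1.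
Proof.
move=> hx.
pose g (i : 'I_n) (o : option 'I_k) : R :=
  if i == a then (o == None)%:R else weight x i o.
transitivity (\sum_(s : {ffun 'I_n -> option 'I_k}) \prod_i g i (s i)).
  apply: eq_bigr => s _; rewrite [RHS](bigD1 a) //= /g eqxx; congr (_ * _).
  by apply: eq_bigr => i ia; rewrite (negbTE ia).
rewrite -bigA_distr_bigA /=; apply: big1 => i _.
rewrite sum_option /g; case: eqP => _ /=; first by rewrite big1 ?addr0.
by rewrite subrK.
Qed.

Lemma slope_in01 x a b : inP x -> marginals_in01 f -> 0 <= slope x a b <= 1.
Proof.
move=> hx hm.
have marg01 (s : ktuple n k) : s a = None -> 0 <= f (toggle a b s) - f s <= 1.
  by move=> sa; rewrite toggle_kadd //; exact: hm.
rewrite slope_marginals; apply/andP; split.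
  apply: sumr_ge0 => s _; case: eqP => sa /=; last by rewrite mul0r.
  rewrite mul1r; apply: mulr_ge0; last exact: cof1_ge0.
  by case/andP: (marg01 s sa).
rewrite -[leRHS](sum_cof1 a hx); apply: ler_sum => s _.
case: eqP => sa /=; last by rewrite !mul0r.
rewrite !mul1r; apply: ler_piMl; first exact: cof1_ge0.
by case/andP: (marg01 s sa).
Qed.

Section DistinctRows.
Variables (x : 'M[R]_(n, k)) (a1 a2 : 'I_n) (b1 b2 : 'I_k).
Hypothesis a12 : a1 != a2.

Let a21 : a2 != a1. Proof. by rewrite eq_sym. Qed.

Lemma cof2_toggle1 s : cof2 x a1 a2 (toggle a1 b1 s) = cof2 x a1 a2 s.
Proof. by apply: eq_bigr => i /andP[i1 _]; rewrite toggle_ne. Qed.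

Lemma cof2_toggle2 s : cof2 x a1 a2 (toggle a2 b2 s) = cof2 x a1 a2 s.
Proof. by apply: eq_bigr => i /andP[_ i2]; rewrite toggle_ne. Qed.

Lemma cross_second_differences : cross x a1 b1 a2 b2 =
  \sum_(s : ktuple n k) (s a1 == None)%:R * (s a2 == None)%:R *
     ((f (toggle a1 b1 (toggle a2 b2 s)) - f (toggle a1 b1 s)
       - f (toggle a2 b2 s) + f s) * cof2 x a1 a2 s).
Proof.
pose G c1 c2 (s : ktuple n k) :=
  (s a1 == c1)%:R * (s a2 == c2)%:R * (f s * cof2 x a1 a2 s).
have split4 (F1 F2 F3 F4 : ktuple n k -> R) :
    \sum_s (F1 s - F2 s - F3 s + F4 s) =
    \sum_s F1 s - \sum_s F2 s - \sum_s F3 s + \sum_s F4 s.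
  by rewrite big_split /= !sumrB.
have -> : cross x a1 b1 a2 b2 = \sum_s (G (Some b1) (Some b2) s
    - G (Some b1) None s - G None (Some b2) s + G None None s).
  by apply: eq_bigr => s _; rewrite /G; case: (s a1) (s a2) => [?|] [?|] /=; ring.
rewrite split4.
rewrite (reindex_inj (inj_comp (can_inj (toggleK a1 b1)) (can_inj (toggleK a2 b2)))).
rewrite [X in _ - X - _ + _](reindex_inj (can_inj (toggleK a1 b1))).
rewrite [X in _ - _ - X + _](reindex_inj (can_inj (toggleK a2 b2))) /=.
rewrite -split4; apply: eq_bigr => s _; rewrite /G.
rewrite !toggle_at (toggle_ne _ _ a12) (toggle_ne _ _ a21) toggle_at.
rewrite !toggle_label_eqS (toggle_ne _ _ a21) !cof2_toggle1 !cof2_toggle2.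
ring.
Qed.

(* When a1, a2 are outside S, the two single toggles meet in S and join in
   the double toggle, so each second difference is a k-submodularity defect. *)
Lemma toggle_meet_join (s : ktuple n k) : s a1 = None -> s a2 = None ->
  kmeet (toggle a1 b1 s) (toggle a2 b2 s) = s /\
  kjoin (toggle a1 b1 s) (toggle a2 b2 s) = toggle a1 b1 (toggle a2 b2 s).
Proof.
move=> s1 s2; split; apply/ffunP => i; rewrite !ffunE.
  case: (eqVneq i a1) => [->|n1]; first by rewrite ?eqxx ?(negbTE a12) s1 /toggle_label.
  case: (eqVneq i a2) => [->|n2]; first by rewrite ?eqxx ?(negbTE a21) s2 /toggle_label.
  by rewrite ?(negbTE n1) ?(negbTE n2) eqxx.
case: (eqVneq i a1) => [->|n1]; first by rewrite ?eqxx ?(negbTE a12) s1 /toggle_label.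
case: (eqVneq i a2) => [->|n2]; first by rewrite ?eqxx ?(negbTE a21) s2 /toggle_label.
by rewrite ?(negbTE n1) ?(negbTE n2); case: (s i) => // c; rewrite eqxx.
Qed.

(* k-submodularity makes F concave along e_{a1,b1} - e_{a2,b2}. *)
Lemma cross_le0 : inP x -> ksubmodular f -> cross x a1 b1 a2 b2 <= 0.
Proof.
move=> hx hs; rewrite cross_second_differences -oppr_ge0 -sumrN.
apply: sumr_ge0 => s _; rewrite oppr_ge0.
case: (eqVneq (s a1) None) => s1 /=; last by rewrite !mul0r.
case: (eqVneq (s a2) None) => s2 /=; last by rewrite mulr0 mul0r.
rewrite !mul1r; apply: mulr_le0_ge0; last exact: cof2_ge0.
have [meetE joinE] := toggle_meet_join s1 s2.
have := hs (toggle a1 b1 s) (toggle a2 b2 s); rewrite meetE joinE.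
lra.
Qed.

End DistinctRows.

Lemma multilin_line x a1 b1 a2 b2 : inP x -> ksubmodular f ->
  exists2 C, C <= 0 & forall t,
    multilin f (x + t *: (delta_mx a1 b1 - delta_mx a2 b2)) =
    multilin f x + t * (slope x a1 b1 - slope x a2 b2) - t ^+ 2 * C.
Proof.
move=> hx hs; case: (eqVneq a1 a2) => [<-|a12].
  by exists 0 => // t; rewrite multilin_dir_same; ring.
exists (cross x a1 b1 a2 b2); first exact: cross_le0.
by move=> t; rewrite multilin_dir.
Qed.

End MultilinearAlongLines.

Lemma derive1_affine (R : realType) (c a : R) :
  derive1 (fun t : R => c + t * a) 0 = a.
Proof.
rewrite derive1E derive_val add0r mul1r scale0r add0r; exact: mulr1.
Qed.

Lemma partialF_multilin (R : realType) n k (f : ktuple n k -> R) x a b :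
  partialF (multilin f) a b x = slope f x a b.
Proof.
rewrite /partialF.
have -> : (fun t => multilin f (x + t *: delta_mx a b)) =
          (fun t => multilin f x + t * slope f x a b).
  by apply/funext => t; rewrite multilin_delta.
exact: derive1_affine.
Qed.

Section ExpQuadraticBound.
Variable R : realType.

(* From e^{-y} >= 1 - y: any q with (1 - y) q >= 1 bounds e^y, for y < 1. *)
Lemma expR_le_of_1B (y q : R) : y < 1 -> 1 <= (1 - y) * q -> expR y <= q.
Proof.
move=> y1 hq.
have e1B : expR y * (1 - y) <= 1.
  rewrite -[leRHS](expRxMexpNx_1 y) ler_wpM2l ?expR_ge0 //; exact: expR_ge1Dx.
rewrite -(ler_pM2r (_ : 0 < 1 - y)) ?subr_gt0 //; lra.
Qed.

Lemma expR_quad_neg (y : R) : -1 <= y <= 0 -> expR y <= 1 + y + y ^+ 2.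
Proof.
move=> /andP[y_ge y_le]; apply: expR_le_of_1B; first lra.
have -> : (1 - y) * (1 + y + y ^+ 2) = 1 - y ^+ 3 by ring.
suff : y ^+ 3 <= 0 by lra.
by rewrite exprS mulr_le0_ge0 // sqr_ge0.
Qed.

Lemma expR_quad_small (z : R) : 0 <= z <= 1/8 -> expR z <= 1 + z + 8/7 * z ^+ 2.
Proof.
move=> /andP[z_ge z_le]; apply: expR_le_of_1B; first lra.
have -> : (1 - z) * (1 + z + 8/7 * z ^+ 2) = 1 + z ^+ 2 * (1/7 - 8/7 * z) by field.
suff : 0 <= z ^+ 2 * (1/7 - 8/7 * z) by lra.
by apply: mulr_ge0; [exact: sqr_ge0 | lra].
Qed.

(* Doubling: a quadratic bound e^z <= 1 + z + a z^2 on [0, r] yields, by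
   squaring e^{2z} = (e^z)^2, the bound e^y <= 1 + y + b y^2 on [0, 2r]. *)
Lemma expR_quad_double (a b r : R) : 0 <= a -> 0 <= r ->
  1 + 2 * a + 2 * a * r + a ^+ 2 * r ^+ 2 <= 4 * b ->
  (forall z, 0 <= z <= r -> expR z <= 1 + z + a * z ^+ 2) ->
  forall y, 0 <= y <= 2 * r -> expR y <= 1 + y + b * y ^+ 2.
Proof.
move=> a0 r0 hab hz y /andP[y0 yr].
pose z := y / 2.
have [z0 zr] : 0 <= z /\ z <= r by rewrite /z; split; lra.
have -> : y = z + z by rewrite /z; field.
have q0 : 0 <= 1 + z + a * z ^+ 2.
  suff : 0 <= a * z ^+ 2 by lra.
  by apply: mulr_ge0 => //; exact: sqr_ge0.
rewrite expRD (le_trans (ler_pM (expR_ge0 _) (expR_ge0 _) (hz z _) (hz z _)))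
  ?z0 ?zr //.
have h1 : a * z <= a * r by apply: ler_wpM2l.
have h2 : a ^+ 2 * z ^+ 2 <= a ^+ 2 * r ^+ 2.
  by rewrite ler_wpM2l ?sqr_ge0 //; nra.
have h3 : 0 <= z ^+ 2 * (4 * b - (1 + 2 * a + 2 * a * z + a ^+ 2 * z ^+ 2)).
  by apply: mulr_ge0; [exact: sqr_ge0 | lra].
have -> : (1 + z + a * z ^+ 2) * (1 + z + a * z ^+ 2) =
  1 + (z + z) + b * (z + z) ^+ 2
  - z ^+ 2 * (4 * b - (1 + 2 * a + 2 * a * z + a ^+ 2 * z ^+ 2)) by ring.
lra.
Qed.

(* Three doublings starting from [0, 1/8] reach [0, 1]. *)
Lemma expR_quad_pos (y : R) : 0 <= y <= 1 -> expR y <= 1 + y + y ^+ 2.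
Proof.
have weaken (r r' : R) (P : R -> Prop) : r' <= r ->
    (forall z, 0 <= z <= r -> P z) -> forall z, 0 <= z <= r' -> P z.
  by move=> rr' hP z /andP[z0 zr]; apply: hP; apply/andP; split; lra.
have to_1_4 := @expR_quad_double (8/7) (9/10) (1/8) ltac:(lra) ltac:(lra)
  ltac:(lra) expR_quad_small.
have to_1_2 := @expR_quad_double (9/10) (83/100) (1/4) ltac:(lra) ltac:(lra)
  ltac:(lra) (weaken (2 * (1/8)) (1/4) _ ltac:(lra) to_1_4).
have to_1 := @expR_quad_double (83/100) 1 (1/2) ltac:(lra) ltac:(lra)
  ltac:(lra) (weaken (2 * (1/4)) (1/2) _ ltac:(lra) to_1_2).
move=> hy; rewrite -[y ^+ 2]mul1r; apply: to_1.
by move: hy => /andP[? ?]; apply/andP; split; lra.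
Qed.

Lemma expR_quad (y : R) : -1 <= y <= 1 -> expR y <= 1 + y + y ^+ 2.
Proof.
move=> /andP[y_ge y_le]; case: (lerP y 0) => y0.
  by apply: expR_quad_neg; apply/andP.
by apply: expR_quad_pos; rewrite y_le ltW.
Qed.

End ExpQuadraticBound.

Lemma expR_concave_step (R : realType) (t lambda D C : R) :
  -1 <= t <= 1 -> 0 <= lambda <= 1 -> -1 <= D <= 1 -> C <= 0 ->
  expR (lambda * (t * D + t ^+ 2 * C)) <= 1 + lambda * t * D + (lambda * t * D) ^+ 2.
Proof.
move=> /andP[t_ge t_le] /andP[l0 l1] /andP[D_ge D_le] C0.
apply: (le_trans (y := expR (lambda * t * D))).
  rewrite ler_expR mulrDr mulrA gerDl.
  by apply: mulr_ge0_le0 => //; apply: mulr_ge0_le0 => //; exact: sqr_ge0.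
have unit_norm (u : R) : -1 <= u <= 1 -> `|u| <= 1 by rewrite ler_norml.
apply: expR_quad; rewrite -ler_norml !normrM.
have ? : `|lambda| <= 1 by rewrite ger0_norm.
have ? : `|t| <= 1 by apply: unit_norm; apply/andP.
have ? : `|D| <= 1 by apply: unit_norm; apply/andP.
by rewrite !mulr_ile1 ?mulr_ge0.
Qed.

(* Two-point exponential moment bound: the random step x' = x + β d with
   probability γ/(β+γ), x - γ d with probability β/(β+γ), has mean zero; since
   F is concave along d its exponential moment is at most exp(λ²βγD²). *)
Lemma two_point_expR_bound (R : realType) (beta gamma lambda D C : R) :
  0 <= beta -> 0 <= gamma -> 0 < beta + gamma -> beta + gamma <= 1 ->
  0 <= lambda <= 1 -> -1 <= D <= 1 -> C <= 0 ->
  gamma / (beta + gamma) * expR (lambda * (beta * D + beta ^+ 2 * C)) +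
  beta / (beta + gamma) * expR (lambda * ((- gamma) * D + (- gamma) ^+ 2 * C))
  <= expR (lambda ^+ 2 * beta * gamma * D ^+ 2).
Proof.
move=> b0 g0 bg0 bg1 hl hD C0.
have E_beta := expR_concave_step (t := beta) ltac:(apply/andP; split; lra) hl hD C0.
have E_gamma := expR_concave_step (t := - gamma) ltac:(apply/andP; split; lra) hl hD C0.
have p0 : 0 <= gamma / (beta + gamma) by apply: divr_ge0 => //; exact: ltW.
have q0 : 0 <= beta / (beta + gamma) by apply: divr_ge0 => //; exact: ltW.
apply: le_trans (lerD (ler_wpM2l p0 E_beta) (ler_wpM2l q0 E_gamma)) _.
have -> : gamma / (beta + gamma) * (1 + lambda * beta * D + (lambda * beta * D) ^+ 2)
   + beta / (beta + gamma) * (1 + lambda * - gamma * D + (lambda * - gamma * D) ^+ 2)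
   = 1 + lambda ^+ 2 * beta * gamma * D ^+ 2.
  by field; rewrite lt0r_neq0.
exact: expR_ge1Dx.
Qed.

Theorem mainTheorem10 (R : realType) (n k : nat) (f : ktuple n k -> R)
  (x : 'M[R]_(n, k)) (i1 i2 : 'I_n) (j1 j2 : 'I_k) (beta gamma lambda : R) :
  (0 < k)%N ->
  ksubmodular f -> kmonotone f -> marginals_in01 f ->
  inP x -> (i1, j1) != (i2, j2) ->
  0 <= beta -> 0 <= gamma -> 0 < beta + gamma -> beta + gamma <= 1 ->
  inP (x + beta *: (delta_mx i1 j1 - delta_mx i2 j2)) ->
  inP (x - gamma *: (delta_mx i1 j1 - delta_mx i2 j2)) ->
  0 <= lambda <= 1 ->
  let F := multilin f in
  let d := delta_mx i1 j1 - delta_mx i2 j2 in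
  gamma / (beta + gamma) * expR (lambda * (F x - F (x + beta *: d))) +
  beta / (beta + gamma) * expR (lambda * (F x - F (x - gamma *: d)))
  <= expR (lambda ^+ 2 * beta * gamma *
           (partialF F i2 j2 x - partialF F i1 j1 x) ^+ 2).
Proof.
move=> _ hs _ hm hx _ b0 g0 bg0 bg1 _ _ hl /=.
set F := multilin f; set d := delta_mx i1 j1 - delta_mx i2 j2.
have [C C0 F_line] := multilin_line i1 j1 i2 j2 hx hs.
rewrite !partialF_multilin.
set D := slope f x i2 j2 - slope f x i1 j1.
have D11 : -1 <= D <= 1.
  have /andP[? ?] := slope_in01 i1 j1 hx hm.
  have /andP[? ?] := slope_in01 i2 j2 hx hm.
  by apply/andP; split; rewrite /D; lra.
have -> : F x - F (x + beta *: d) = beta * D + beta ^+ 2 * C.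
  by rewrite /F F_line /D; ring.
have -> : F x - F (x - gamma *: d) = (- gamma) * D + (- gamma) ^+ 2 * C.
  by rewrite /F -scaleNr F_line /D; ring.
exact: two_point_expR_bound.
Qed.
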